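(* Let $\eta\in(0,1)$, $N_B\ge 0$, $N_{\rm coh}\ge 0$ and $r\in(0,1]$ be fixed, and for $\theta\in\mathbb{R}$ consider the single-mode Gaussian probe with first-moment vector $\mathbf{d}_S=\sqrt{2N_{\rm coh}}\,(\cos\theta,\sin\theta)^\top$ and covariance matrix $\boldsymbol{\Sigma}_S=\mathrm{diag}(r/2,\,1/(2r))$. Let $I^{\rm IF}_\eta(\theta)$ denote the quantum Fisher information of $\eta$ for the corresponding output state (defined in the context). Then $\theta\mapsto I^{\rm IF}_\eta(\theta)$ attains its maximum over $\mathbb{R}$ at $\theta=n\pi$ for every integer $n$.
   Context: Quadratures $\mathbf{R}=(q,p)^\top$ with $[R_i,R_j]=\mathrm{i}\Omega_{ij}$, $\boldsymbol\Omega=\begin{bmatrix}0&1\\-1&0\end{bmatrix}$; covariance matrix $\Sigma_{ij}=\tfrac12\langle R_iR_j+R_jR_i\rangle-\langle R_i\rangle\langle R_j\rangle$ (vacuum has $\boldsymbol\Sigma=\mathbb{I}_2/2$), first moments $d_i=\langle R_i\rangle$. The thermal lossy channel with transmission $\eta$ and thermal photon number $N_B$ (Heisenberg picture $a\mapsto \eta a+\sqrt{1-\eta^2}\,h$, $h$ thermal with $\langle h^\dagger h\rangle=N_B$) maps a Gaussian state with moments $(\mathbf d_S,\boldsymbol\Sigma_S)$ to the Gaussian state with $\tilde{\mathbf d}=\eta\mathbf d_S$ and $\tilde{\boldsymbol\Sigma}=\eta^2\boldsymbol\Sigma_S+y\,\mathbb{I}_2$, where $y=(1-\eta^2)(N_B+\tfrac12)$.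 The quantum Fisher information of $\eta$ for this single-mode Gaussian output is $I_\eta=\frac{\mathrm{Tr}\{(\tilde{\boldsymbol\Sigma}^{-1}\partial_\eta\tilde{\boldsymbol\Sigma})^2\}}{2(1+\mu^2)}+\frac{2(\partial_\eta\mu)^2}{1-\mu^4}+(\partial_\eta\tilde{\mathbf d})^\top\tilde{\boldsymbol\Sigma}^{-1}(\partial_\eta\tilde{\mathbf d})$, with purity $\mu=(4\det\tilde{\boldsymbol\Sigma})^{-1/2}$. *)

From Stdlib Require Import Reals.
From Coquelicot Require Import Coquelicot.
From mathcomp Require Import all_boot all_algebra.
From mathcomp Require Import Rstruct.

Set Implicit Arguments. Unset Strict Implicit. Unset Printing Implicit Defensive.
Import GRing.Theory.
Local Open Scope ring_scope.

Definition ynoise (eta NB : R) : R := (1 - eta ^+ 2) * (NB + 2^-1).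

(* Output moments of the thermal lossy channel *)
Definition out_d (eta : R) (dS : 'cV[R]_2) : 'cV[R]_2 := eta *: dS.
Definition out_Sigma (NB eta : R) (SigS : 'M[R]_2) : 'M[R]_2 :=
  eta ^+ 2 *: SigS + ynoise eta NB *: 1%:M.

Definition dmx (m n : nat) (F : R -> 'M[R]_(m, n)) (x : R) : 'M[R]_(m, n) :=
  \matrix_(i, j) Derive (fun e => F e i j) x.

Definition purity (S : 'M[R]_2) : R := (Num.sqrt (4 * \det S))^-1.

(* QFI formula for a single-mode Gaussian family (d(eta), Sigma(eta)) *)
Definition gaussQFI (d : R -> 'cV[R]_2) (Sig : R -> 'M[R]_2) (eta : R) : R :=
  let S := Sig eta in
  let Si := invmx S in
  let dS := dmx Sig eta in
  let mu := purity S in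
  let dmu := Derive (fun e => purity (Sig e)) eta in
  let dd := dmx d eta in
  \tr ((Si *m dS) *m (Si *m dS)) / (2 * (1 + mu ^+ 2))
  + 2 * dmu ^+ 2 / (1 - mu ^+ 4)
  + ((dd^T *m Si *m dd) 0 0).

Definition probe_d (Ncoh th : R) : 'cV[R]_2 :=
  \col_(i < 2) (Num.sqrt (2 * Ncoh) * (if i == 0 then cos th else sin th)).
Definition probe_Sigma (r : R) : 'M[R]_2 :=
  \matrix_(i < 2, j < 2)
    (if i == j then (if i == 0 then r / 2 else (2 * r)^-1) else 0).

Definition QFI_IF (eta NB Ncoh r th : R) : R :=
  gaussQFI (fun e => out_d e (probe_d Ncoh th))
           (fun e => out_Sigma NB e (probe_Sigma r)) eta.

(** Only the displacement term of the quantum Fisher information depends on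
    [theta].  The output covariance matrix is diagonal with variances
    [a = eta^2 r/2 + y <= b = eta^2/(2r) + y] (because [r <= 1]), so that term
    equals [2 Ncoh (cos^2 theta / a + sin^2 theta / b)], a convex combination
    of [1/a >= 1/b]; it is largest when [sin theta = 0]. *)
From Stdlib Require Import Reals.
From mathcomp Require Import all_boot all_order all_algebra.
From mathcomp Require Import Rstruct.
From Coquelicot Require Coquelicot.
From mathcomp Require Import ring.
Import Order.TTheory GRing.Theory Num.Theory.
Local Open Scope ring_scope.

(* [probe_Sigma r] is [diag2 (r / 2) (2 * r)^-1] up to conversion. *)
Definition diag2 {T : nzRingType} (p q : T) : 'M[T]_2 :=
  \matrix_(i < 2, j < 2) (if i == j then (if i == 0 then p else q) else 0).

Lemma invmx_diag2 (F : fieldType) (p q : F) : p != 0 -> q != 0 ->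
  invmx (diag2 p q) = diag2 p^-1 q^-1.
Proof.
move=> p_neq0 q_neq0.
have diag2_mulV : diag2 p q *m diag2 p^-1 q^-1 = 1%:M.
  apply/matrixP => i j; rewrite !mxE !big_ord_recr big_ord0 !mxE.
  by case: i => [[|[|//]] ?]; case: j => [[|[|//]] ?] /=;
    rewrite ?mulr0 ?mul0r ?addr0 ?add0r ?divff.
have [diag2_unit _] := mulmx1_unit diag2_mulV.
by rewrite -[invmx _]mulmx1 -diag2_mulV mulmxA mulVmx // mul1mx.
Qed.

Lemma diag2_quadform (T : comNzRingType) (v : 'cV[T]_2) (p q : T) :
  (v^T *m diag2 p q *m v) 0 0 = v 0 0 ^+ 2 * p + v 1 0 ^+ 2 * q.
Proof.
rewrite !mxE !big_ord_recr big_ord0 /= !mxE !big_ord_recr !big_ord0 /= !mxE /=.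
have -> : widen_ord (m := 2) (leqnSn 1) ord_max = 0 by apply/val_inj.
have -> : (ord_max : 'I_2) = 1 by apply/val_inj.
rewrite /= ?mulr0 ?mul0r ?add0r ?addr0; ring.
Qed.

Lemma dmx_scale (m n : nat) (A : 'M[R]_(m, n)) (x : R) :
  dmx (fun e => e *: A) x = A.
Proof.
apply/matrixP => i j; rewrite mxE.
rewrite (Coquelicot.Derive.Derive_ext _ (fun e => Rmult e (A i j)));
  last by move=> e; rewrite mxE.
by rewrite Coquelicot.Derive.Derive_scal_l Coquelicot.Derive.Derive_id Rmult_1_l.
Qed.

Lemma QFI_IF_displacement_split (eta NB Ncoh r : R) : exists K, forall th,
  QFI_IF eta NB Ncoh r th = K +
    ((probe_d Ncoh th)^T *m invmx (out_Sigma NB eta (probe_Sigma r))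
       *m probe_d Ncoh th) 0 0.
Proof. by eexists => th; rewrite /QFI_IF /gaussQFI /out_d dmx_scale. Qed.

Lemma out_Sigma_diag2 (NB eta p q : R) :
  out_Sigma NB eta (diag2 p q) =
    diag2 (eta ^+ 2 * p + ynoise eta NB) (eta ^+ 2 * q + ynoise eta NB).
Proof.
apply/matrixP => i j; rewrite !mxE.
by case: i => [[|[|//]] ?]; case: j => [[|[|//]] ?] /=;
  rewrite ?mulr0 ?mulr1 ?addr0 ?add0r.
Qed.

Lemma probe_quadform (Ncoh th p q : R) :
  ((probe_d Ncoh th)^T *m diag2 p q *m probe_d Ncoh th) 0 0 =
    Num.sqrt (2 * Ncoh) ^+ 2 * (cos th ^+ 2 * p + sin th ^+ 2 * q).
Proof. rewrite diag2_quadform !mxE /=; ring. Qed.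

Lemma ynoise_gt0 (eta NB : R) : 0 <= eta < 1 -> 0 <= NB -> 0 < ynoise eta NB.
Proof.
move=> /andP[eta_ge0 eta_lt1] NB_ge0.
rewrite /ynoise mulr_gt0 //; last by rewrite ltr_wpDl // invr_gt0.
by rewrite subr_gt0 expr_lt1.
Qed.

Lemma probe_variances_le (r : R) : 0 < r <= 1 -> r / 2 <= (2 * r)^-1.
Proof.
move=> /andP[r_gt0 r_le1].
rewrite -[(2 * r)^-1]mul1r ler_pdivlMr ?mulr_gt0 //.
have -> : r / 2 * (2 * r) = r * r by field.
by rewrite mulr_ile1 // ltW.
Qed.

Lemma cos_sin_combination_le (x p q : R) : q <= p ->
  cos x ^+ 2 * p + sin x ^+ 2 * q <= p.
Proof.
move=> q_le_p.
have cos2_sin2 : cos x ^+ 2 + sin x ^+ 2 = 1.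
  by have := sin2_cos2 x; rewrite /Rsqr !RmultE RplusE !expr2 addrC.
have -> : cos x ^+ 2 = 1 - sin x ^+ 2 by rewrite -cos2_sin2 addrK.
rewrite -subr_ge0 (_ : _ - _ = sin x ^+ 2 * (p - q)); last by ring.
by rewrite mulr_ge0 ?sqr_ge0 ?subr_ge0.
Qed.

Lemma sin_intPI (n : int) : sin (n%:~R * PI) = 0.
Proof.
have sin_natPI m : sin (m%:R * PI) = 0.
  by apply: sin_eq_0_1; exists (Z.of_nat m); rewrite -INR_IZR_INZ INRE.
case: n => m; first exact: sin_natPI.
rewrite NegzE mulrNz -RoppE -Ropp_mult_distr_l sin_neg.
by rewrite [sin _]sin_natPI; apply: oppr0.
Qed.

Theorem lemma1 (eta NB Ncoh r : R) :
  0 < eta -> eta < 1 -> 0 <= NB -> 0 <= Ncoh -> 0 < r -> r <= 1 ->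
  forall (n : int) (th : R),
    QFI_IF eta NB Ncoh r th <= QFI_IF eta NB Ncoh r (n%:~R * PI).
Proof.
move=> eta_gt0 eta_lt1 NB_ge0 _ r_gt0 r_le1 n th.
have [K QFI_IF_E] := QFI_IF_displacement_split eta NB Ncoh r.
rewrite !QFI_IF_E lerD2l out_Sigma_diag2.
set a := _ + ynoise eta NB; set b := _ + ynoise eta NB.
have y_gt0 : 0 < ynoise eta NB by rewrite ynoise_gt0 // (ltW eta_gt0) eta_lt1.
have a_gt0 : 0 < a by rewrite ltr_wpDl // mulr_ge0 ?sqr_ge0 ?divr_ge0 ?ltW.
have a_le_b : a <= b.
  by rewrite lerD2r ler_wpM2l ?sqr_ge0 ?probe_variances_le ?r_gt0.
have b_gt0 : 0 < b := lt_le_trans a_gt0 a_le_b.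
rewrite invmx_diag2 ?gt_eqF // !probe_quadform ler_wpM2l ?sqr_ge0 //.
have cos2_intPI : cos (n%:~R * PI) ^+ 2 = 1.
  by have := sin2_cos2 (n%:~R * PI); rewrite /Rsqr sin_intPI !RmultE RplusE mul0r add0r expr2.
rewrite sin_intPI cos2_intPI expr0n mul1r mul0r addr0.
by apply: cos_sin_combination_le; rewrite lef_pV2 ?posrE.
Qed.
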